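(* Let $n=2$, $O_1=\{p\in M: v_1(p)\ge v_2(p)\}$, $O_2=\{q\in M: v_1(q)<v_2(q)\}$, and assume that in $(O_1,O_2)$ agent 2 strongly envies agent 1. Consider the following procedure LocalSearch applied to an allocation $(A_1,A_2)$ in which agent 2 does not strongly envy agent 1: while agent 1 strongly envies agent 2, pick an arbitrary item $g\in A_2\setminus O_2$ and set $A_2\leftarrow A_2\setminus\{g\}$; then, if $v_2(A_2)<v_2(A_1)$ (agent 2 envies agent 1 in the partial allocation $(A_1,A_2)$), set $(A_1,A_2)\leftarrow(A_2\cup\{g\},A_1)$, and otherwise set $(A_1,A_2)\leftarrow(A_1\cup\{g\},A_2)$. Then whenever the loop condition holds an item $g\in A_2\setminus O_2$ exists, the loop terminates after at most $m$ iterations, and the output allocation is EF1 and has social welfare at least that of the input allocation.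
   Context: Two agents with additive valuations $v_1,v_2:2^M\to\mathbb{R}_{\ge0}$ over items $M=[m]$; an allocation $(A_1,A_2)$ is a partition of $M$; social welfare is $v_1(A_1)+v_2(A_2)$. Agent $i$ envies $j$ if $v_i(A_i)<v_i(A_j)$; agent $i$ strongly envies $j$ if $A_j\ne\emptyset$ and $v_i(A_i)<v_i(A_j\setminus\{g\})$ for all $g\in A_j$. An allocation is EF1 if no agent strongly envies the other. *)

From HB Require Import structures.
From mathcomp Require Import all_boot all_order all_algebra.
Set Implicit Arguments. Unset Strict Implicit. Unset Printing Implicit Defensive.
Import Order.TTheory GRing.Theory Num.Theory.
Local Open Scope ring_scope.

Section Fair.
Variables (m : nat) (R : realFieldType).

Definition val (v : 'I_m -> R) (S : {set 'I_m}) : R := \sum_(i in S) v i.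

Definition alloc := ({set 'I_m} * {set 'I_m})%type.

Definition is_partition (A : alloc) : bool :=
  (A.1 :&: A.2 == set0) && (A.1 :|: A.2 == setT).

Definition envies (vi : 'I_m -> R) (Ai Aj : {set 'I_m}) : bool :=
  val vi Ai < val vi Aj.

Definition strongly_envies (vi : 'I_m -> R) (Ai Aj : {set 'I_m}) : bool :=
  (Aj != set0) && [forall g in Aj, val vi Ai < val vi (Aj :\ g)].

Definition EF1 (v1 v2 : 'I_m -> R) (A : alloc) : bool :=
  ~~ strongly_envies v1 A.1 A.2 && ~~ strongly_envies v2 A.2 A.1.

Definition SW (v1 v2 : 'I_m -> R) (A : alloc) : R := val v1 A.1 + val v2 A.2.

Definition O1 (v1 v2 : 'I_m -> R) : {set 'I_m} := [set p | v2 p <= v1 p].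
Definition O2 (v1 v2 : 'I_m -> R) : {set 'I_m} := [set q | v1 q < v2 q].

(* One iteration of the LocalSearch loop, for an arbitrary choice of
   g in A2 \ O2: the loop condition holds in A, and B is the result. *)
Definition ls_step (v1 v2 : 'I_m -> R) (A B : alloc) : bool :=
  strongly_envies v1 A.1 A.2 &&
  [exists g in A.2 :\: O2 v1 v2,
     let A2' := A.2 :\ g in
     B == (if envies v2 A2' A.1 then (g |: A2', A.1)
           else (g |: A.1, A2'))].

End Fair.

From Pilot Require Import Defs.
From HB Require Import structures.
From mathcomp Require Import all_boot all_order all_algebra.
From mathcomp Require Import lra.
Import Order.TTheory GRing.Theory Num.Theory.
Local Open Scope ring_scope.
Set Implicit Arguments. Unset Strict Implicit.
Local Notation val := Defs.val.

(* Invariant of the loop: (A1, A2) is a partition and agent 2 does not strongly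
   envy agent 1.  A step removes from A2 an item g with v2 g <= v1 g.  If agent 2
   then envies A1, the bundles are swapped: agent 1 receives all of A2, which he
   strictly prefers to A1, so the loop stops; he gains more than v1 g while agent 2
   loses less than v2 g.  Otherwise g moves to A1, costing agent 2 exactly
   v2 g <= v1 g, and |A1| grows by one, so there are at most m steps.  Either way
   agent 2 does not strongly envy agent 1's new bundle: remove g from it.
   Finally, if A2 were contained in O2, then O1 would be contained in A1, and the
   strong envy of agent 2 in (O1, O2) would carry over to (A1, A2). *)

Section Valuation.
Variables (m : nat) (R : realFieldType) (v : 'I_m -> R).
Implicit Types (A B : {set 'I_m}) (g : 'I_m).

Lemma val_setD1 A g : g \in A -> val v A = v g + val v (A :\ g).
Proof. exact: big_setD1. Qed.

Lemma val_setU1 A g : g \notin A -> val v (g |: A) = v g + val v A.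
Proof. exact: big_setU1. Qed.

Lemma strongly_envies_item A B g :
  strongly_envies v A B -> g \in B -> val v A < val v (B :\ g).
Proof. by case/andP=> _ /forallP /(_ g) /implyP. Qed.

Lemma no_strong_envy_of_item A B g :
  g \in B -> val v (B :\ g) <= val v A -> ~~ strongly_envies v A B.
Proof.
move=> gB le_BgA; apply/nandP; right; rewrite negb_forall.
by apply/existsP; exists g; rewrite gB -leNgt.
Qed.

Hypothesis v_ge0 : forall i, 0 <= v i.

Lemma val_subset A B : A \subset B -> val v A <= val v B.
Proof.
move=> sAB; rewrite /val [X in _ <= X](big_setID A) /= (setIidPr sAB) lerDl.
exact: sumr_ge0.
Qed.

Lemma strongly_envies_envies A B : strongly_envies v A B -> envies v A B.
Proof.
case/andP=> /set0Pn [g gB] /forallP /(_ g); rewrite gB /envies => lt_ABg.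
exact: lt_le_trans lt_ABg (val_subset (subD1set B g)).
Qed.

Lemma strongly_enviesS A A' B B' : A' \subset A -> B \subset B' ->
  strongly_envies v A B -> strongly_envies v A' B'.
Proof.
move=> sA sB /andP [/set0Pn [g0 g0B] /forallP envyB]; apply/andP; split.
  by apply/set0Pn; exists g0; exact: subsetP g0B.
apply/forallP => g; apply/implyP => gB'.
apply: le_lt_trans (val_subset sA) _.
have [gB | gNB] := boolP (g \in B).
  by have := envyB g; rewrite gB => /lt_le_trans; apply; exact/val_subset/setSD.
have := envyB g0; rewrite g0B => /lt_le_trans; apply.
apply: le_trans (val_subset (subD1set B g0)) (val_subset _).
apply/subsetP => x xB; rewrite !inE (subsetP sB) // andbT.
by apply: contraNneq gNB => <-.
Qed.

End Valuation.

Section Partition.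
Variable m : nat.

Lemma is_partitionE (A1 A2 : {set 'I_m}) : is_partition (A1, A2) = (A1 == ~: A2).
Proof.
apply/andP/eqP => [[/eqP/setP dis /eqP/setP cov] | ->]; last first.
  by rewrite setIC setICr setUC setUCr.
apply/setP => x; move: (dis x) (cov x); rewrite !inE.
by case: (x \in A1); case: (x \in A2).
Qed.

Lemma is_partition_swap (A1 A2 : {set 'I_m}) :
  is_partition (A1, A2) -> is_partition (A2, A1).
Proof. by rewrite /is_partition /= setIC setUC. Qed.

Lemma is_partition_move (A1 A2 : {set 'I_m}) g :
  is_partition (A1, A2) -> is_partition (g |: A1, A2 :\ g).
Proof. by rewrite !is_partitionE => /eqP ->; rewrite setCD setUC. Qed.

Lemma is_partition_card (A1 A2 : {set 'I_m}) :
  is_partition (A1, A2) -> A2 != set0 -> (#|A1| < m)%N.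
Proof.
rewrite is_partitionE => /eqP -> A2_neq0.
rewrite -[m in (_ < m)%N]card_ord -(cardsC A2) -[X in (X < _)%N]add0n.
by rewrite ltn_add2r card_gt0.
Qed.

End Partition.

Section LocalSearch.
Variables (m : nat) (R : realFieldType) (v1 v2 : 'I_m -> R).
Hypotheses (v1_ge0 : forall i, 0 <= v1 i) (v2_ge0 : forall i, 0 <= v2 i).

Definition ls_inv (A : alloc m) : bool :=
  is_partition A && ~~ strongly_envies v2 A.2 A.1.

Lemma O1_setC : O1 v1 v2 = ~: O2 v1 v2.
Proof. by apply/setP => x; rewrite !inE leNgt. Qed.

Lemma swap_step (A1 A2 : {set 'I_m}) g :
  is_partition (A1, A2) -> g \in A2 -> v2 g <= v1 g ->
  strongly_envies v1 A1 A2 -> val v2 (A2 :\ g) < val v2 A1 ->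
  [/\ ls_inv (A2, A1), SW v1 v2 (A1, A2) <= SW v1 v2 (A2, A1)
    & ~~ strongly_envies v1 A2 A1].
Proof.
move=> partA gA2 vg envy1 envy2; have lt1 := strongly_envies_item envy1 gA2.
have e1 := val_setD1 v1 gA2; have e2 := val_setD1 v2 gA2.
split.
- rewrite /ls_inv is_partition_swap //=.
  by apply: no_strong_envy_of_item gA2 _; exact: ltW.
- rewrite /SW /=; lra.
- apply/negP => /(strongly_envies_envies v1_ge0); rewrite /envies.
  by have := v1_ge0 g; lra.
Qed.

Lemma move_step (A1 A2 : {set 'I_m}) g :
  is_partition (A1, A2) -> g \in A2 -> v2 g <= v1 g ->
  val v2 A1 <= val v2 (A2 :\ g) ->
  [/\ ls_inv (g |: A1, A2 :\ g), SW v1 v2 (A1, A2) <= SW v1 v2 (g |: A1, A2 :\ g)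
    & #|g |: A1| = #|A1|.+1].
Proof.
move=> partA gA2 vg no_envy2.
have gA1 : g \notin A1 by move: partA; rewrite is_partitionE => /eqP ->; rewrite inE gA2.
split.
- rewrite /ls_inv is_partition_move //=.
  by apply: no_strong_envy_of_item (setU11 g A1) _; rewrite setU1K.
- by rewrite /SW /= val_setU1 // (val_setD1 v2 gA2); lra.
- by rewrite cardsU1 gA1.
Qed.

Lemma ls_step_spec (A B : alloc m) : is_partition A -> ls_step v1 v2 A B ->
  [/\ ls_inv B, SW v1 v2 A <= SW v1 v2 B
    & #|B.1| = #|A.1|.+1 \/ ~~ strongly_envies v1 B.1 B.2].
Proof.
case: A => A1 A2 partA /andP [envy1 /existsP [g /andP [+ /eqP ->]]] /=.
rewrite !inE -leNgt => /andP [vg gA2]; rewrite /envies.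
case: ltP => [envy2 | no_envy2] /=.
  by rewrite setD1K //; case: (swap_step partA gA2 vg envy1 envy2) => *; split; auto.
by case: (move_step partA gA2 vg no_envy2) => *; split; auto.
Qed.

Lemma ls_run (A : alloc m) (s : seq (alloc m)) :
  ls_inv A -> path (ls_step v1 v2) A s ->
  [/\ (size s + #|A.1| <= m)%N, ls_inv (last A s) & SW v1 v2 A <= SW v1 v2 (last A s)].
Proof.
elim: s A => [|B s IH] A invA /=.
  by move=> _; split; rewrite // add0n -[X in (_ <= X)%N]card_ord max_card.
case/andP: invA => partA _ /andP [stepAB pathB].
have [invB le_SW progress] := ls_step_spec partA stepAB.
have [size_s invC le_SW'] := IH B invB pathB.
split => //; last exact: le_trans le_SW'.
have /andP [envy1 _] := stepAB.
have ltA1 := is_partition_card partA (proj1 (andP envy1)).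
case: progress => [cardB | stopB]; first by rewrite addSnnS -cardB.
case: s pathB {IH size_s invC le_SW'} => [_ | C s /= /andP [/andP [envyB _] _]].
  by rewrite add1n.
by rewrite envyB in stopB.
Qed.

Lemma ls_item_exists (A : alloc m) :
  strongly_envies v2 (O2 v1 v2) (O1 v1 v2) -> ls_inv A ->
  exists g, g \in A.2 :\: O2 v1 v2.
Proof.
case: A => A1 A2 envyO /andP [partA no_envy2] /=.
apply/set0Pn; rewrite setD_eq0; apply: contraNN no_envy2 => sA2O.
apply: strongly_enviesS envyO => //.
by move: partA; rewrite O1_setC is_partitionE => /eqP ->; rewrite setCS.
Qed.

End LocalSearch.

Unset Implicit Arguments.
Theorem lemma2 (m : nat) (R : realFieldType) (v1 v2 : 'I_m -> R)
  (hv1 : forall i, 0 <= v1 i) (hv2 : forall i, 0 <= v2 i)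
  (hO : strongly_envies v2 (O2 v1 v2) (O1 v1 v2))
  (A0 : alloc m) (hA0 : is_partition A0)
  (h21 : ~~ strongly_envies v2 A0.2 A0.1)
  (s : seq (alloc m)) (hs : path (ls_step v1 v2) A0 s) :
  let A := last A0 s in
  [/\ (size s <= m)%N,
      (strongly_envies v1 A.1 A.2 -> exists g, g \in A.2 :\: O2 v1 v2)
    & (~~ strongly_envies v1 A.1 A.2 ->
         EF1 v1 v2 A /\ SW v1 v2 A0 <= SW v1 v2 A)].
Proof.
have invA0 : ls_inv v2 A0 by rewrite /ls_inv hA0.
have [size_s invA le_SW] := ls_run hv1 invA0 hs.
split.
- exact: leq_trans (leq_addr _ _) size_s.
- by move=> _; apply: (ls_item_exists hv2 hO).
- by move=> no_envy1; case/andP: invA => _ no_envy2; rewrite /EF1 no_envy1 no_envy2.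
Qed.
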